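(* For every $n \geq 1$, the base change map $BC : \mathcal{A}_n^t(\mathbb{R}) \to \mathcal{A}_n^t(\mathbb{C})$ is a continuous proper map of locally compact Hausdorff spaces.
   Context: For $F = \mathbb{R}$ or $\mathbb{C}$, $\mathcal{A}_n^t(F)$ is the tempered dual of $GL(n,F)$, topologized via Harish-Chandra's parametrization as the disjoint union $\bigsqcup_{(M,\sigma)} X(M)/W_\sigma(M)$: here $M$ runs over standard (block-diagonal) Levi subgroups, ${}^0M \subset M$ is the subgroup where each diagonal block has determinant of absolute value $1$, $\sigma$ runs over representatives of $W(M)$-orbits of discrete series representations of ${}^0M$ ($W(M)=N(M)/M$), $W_\sigma(M)$ is the stabilizer of $\sigma$, and $X(M)$ is the group of unramified unitary characters of $M$ (those trivial on ${}^0M$); the point $\chi \in X(M)$ corresponds to the parabolically induced representation $i_{GL(n),MN}(\chi\sigma \otimes 1)$. Each $X(M)/W_\sigma(M)$ carries the quotient topology from $X(M) \cong \mathbb{R}^{m}$. For $F=\mathbb{R}$, Levi subgroups correspond to partitions $n = 2q+r$ into $q$ twos and $r$ ones, $M \cong GL(2,\mathbb{R})^q \times (\mathbb{R}^\times)^r$ and $X(M) \cong \mathbb{R}^{q+r}$ via $\mathrm{diag}(g_1,\dots,g_q,\omega_1,\dots,\omega_r)\mapsto \prod|\det g_i|^{it_i}\prod |\omega_j|^{it_{q+j}}$; for $F=\mathbb{C}$ only the diagonal torus $T\cong(\mathbb{C}^\times)^n$ contributes, with $X(T)\cong\mathbb{R}^n$. Base change $BC$ is the map of tempered duals corresponding,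 under the local Langlands correspondence, to restriction of L-parameters from the Weil group $W_{\mathbb{R}} = \mathbb{C}^\times \rtimes \mathbb{Z}/2\mathbb{Z}$ to $W_{\mathbb{C}} = \mathbb{C}^\times$. Explicitly, for unitary characters $\chi_1,\dots,\chi_q$ of $\mathbb{C}^\times$ with $\chi_i \neq \chi_i^\sigma$ (where $\chi^\sigma(z)=\chi(\bar z)$), each defining a discrete series representation $\pi(\chi_i)$ of $GL(2,\mathbb{R})$, and unitary characters $\xi_1,\dots,\xi_r$ of $\mathbb{R}^\times$, the generalized principal series $\pi = i_{GL(n,\mathbb{R}),MN}(\pi(\chi_1)\otimes\dots\otimes\pi(\chi_q)\otimes\xi_1\otimes\dots\otimes\xi_r\otimes 1)$ is sent to $BC(\pi) = i_{GL(n,\mathbb{C}),B(\mathbb{C})}(\chi_1,\chi_1^\sigma,\dots,\chi_q,\chi_q^\sigma,\xi_1\circ N,\dots,\xi_r\circ N)$, where $B(\mathbb{C})$ is the Borel subgroup and $N(z) = z\bar z$. For $n=1$, $BC(\chi) = \chi\circ N$. *)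

(* Encoding of the tempered duals of GL(n,R)
   and GL(n,C) via Harish-Chandra parametrization. *)
From HB Require Import structures.
From mathcomp Require Import all_boot all_order all_algebra all_fingroup.
From mathcomp Require Import all_classical all_reals all_analysis.
From mathcomp Require Import generic_quotient.
Set Implicit Arguments. Unset Strict Implicit. Unset Printing Implicit Defensive.
Import Order.TTheory GRing.Theory Num.Theory.
Import numFieldNormedType.Exports.
Local Open Scope classical_set_scope.
Local Open Scope ring_scope.
Local Open Scope quotient_scope.

Section Generic.
Variable R : realType.
Variable L : eqType.
Variable ls : seq L.
Local Notation m := (size ls).
Definition lab (i : 'I_m) : L := tnth (in_tuple ls) i.
Definition stab (s : 'S_m) : bool := [forall i, lab (s i) == lab i].
Definition perm_act (s : 'S_m) (t : 'rV[R]_m) : 'rV[R]_m := \row_i t ord0 (s i).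
Definition orbit_rel (t t' : 'rV[R]_m) : bool :=
  [exists s : 'S_m, stab s && (t' == perm_act s t)].

Lemma orbit_rel_refl : reflexive orbit_rel.
Proof.
move=> t; apply/existsP; exists 1%g; apply/andP; split.
  by apply/forallP => i; rewrite perm1.
by apply/eqP/matrixP => i j; rewrite !mxE perm1 (ord1 i).
Qed.

Lemma orbit_rel_sym : symmetric orbit_rel.
Proof.
suff H : forall t t', orbit_rel t t' -> orbit_rel t' t.
  by move=> t t'; apply/idP/idP; apply: H.
move=> t t' /existsP[s /andP[/forallP st /eqP ->]].
apply/existsP; exists s^-1%g; apply/andP; split.
  by apply/forallP => i; have := st (s^-1%g i); rewrite permKV => /eqP ->.
by apply/eqP/matrixP => i j; rewrite !mxE permKV (ord1 i).
Qed.

Lemma orbit_rel_trans : transitive orbit_rel.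
Proof.
move=> t2 t1 t3 /existsP[s1 /andP[/forallP st1 /eqP ->]]
  /existsP[s2 /andP[/forallP st2 /eqP ->]].
apply/existsP; exists (s2 * s1)%g; apply/andP; split.
  by apply/forallP => i; rewrite permM (eqP (st1 _)) (eqP (st2 _)).
by apply/eqP/matrixP => i j; rewrite !mxE permM.
Qed.

Definition orbit_equiv := EquivRel orbit_rel orbit_rel_refl orbit_rel_sym orbit_rel_trans.

Definition comp_space : topologicalType := quotient_topology {eq_quot orbit_equiv}.
End Generic.

Definition le_bool (a b : bool) : bool := (a <= b)%N.

Definition CR_pred (n : nat) (c : seq nat * seq bool) : bool :=
  [&& all (fun k => 2 <= k)%N c.1, sorted leq c.1, sorted le_bool c.2
    & ((size c.1).*2 + size c.2 == n)%N].

Definition CR (n : nat) := {c : seq nat * seq bool | CR_pred n c}.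

Definition labR (c : seq nat * seq bool) : seq (nat + bool) :=
  map inl c.1 ++ map inr c.2.

Definition TempR (R : realType) (n : nat) :=
  {c : CR n & comp_space R (labR (val c))}.

Definition le_int (a b : int) : bool := (a <= b)%R.

Definition CC_pred (n : nat) (ms : seq int) : bool :=
  sorted le_int ms && (size ms == n)%N.

Definition CC (n : nat) := {ms : seq int | CC_pred n ms}.

Definition TempC (R : realType) (n : nat) :=
  {c : CC n & comp_space R (val c)}.


Definition bc_labels (c : seq nat * seq bool) : seq int :=
  sort le_int (flatten [seq [:: Posz k.-1; - Posz k.-1] | k <- c.1]
               ++ nseq (size c.2) 0%Z).

Lemma size_flatten2 (T : Type) (f g : nat -> T) (s : seq nat) :
  size (flatten [seq [:: f k; g k] | k <- s]) = (size s).*2.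
Proof. by elim: s => //= k s IH; rewrite IH doubleS. Qed.

Lemma bc_labels_ok (n : nat) (c : seq nat * seq bool) :
  CR_pred n c -> CC_pred n (bc_labels c).
Proof.
case/and4P => _ _ _ /eqP Hn; apply/andP; split.
  by apply: sort_sorted => a b; exact: le_total.
rewrite size_sort size_cat size_nseq.
by rewrite (size_flatten2 (fun k => Posz k.-1) (fun k => - Posz k.-1)) Hn.
Qed.

Definition bc_index (n : nat) (c : CR n) : CC n :=
  exist _ (bc_labels (val c)) (bc_labels_ok (valP c)).

Definition bc_vector (R : realType) (n : nat) (c : CR n)
    (t : 'rV[R]_(size (labR (val c)))) : 'rV[R]_(size (val (bc_index c))) :=
  let ts := [seq t ord0 i | i <- enum 'I_(size (labR (val c)))] in
  let raw := flatten [seq [:: (Posz kt.1.-1, kt.2); (- Posz kt.1.-1, kt.2)]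
                     | kt <- zip (val c).1 ts]
             ++ [seq (0%Z, x) | x <- drop (size (val c).1) ts] in
  let srt := sort (fun p q : int * R => le_int p.1 q.1) raw in
  \row_j nth 0 (map snd srt) j.

Definition BC (R : realType) (n : nat) (p : TempR R n) : TempC R n :=
  let: existT c x := p in
  existT (fun c' : CC n => comp_space R (val c')) (bc_index c)
    (\pi_(comp_space R (val (bc_index c))) (bc_vector (repr x))).

Definition proper_map (X Y : topologicalType) (f : X -> Y) : Prop :=
  forall K : set Y, compact K -> compact (f @^-1` K).

(* Each summand X(M)/W_sigma(M) of either tempered dual is the quotient of a
   real vector space by a finite group of coordinate permutations.  Such a
   quotient map is open and the norm descends to a continuous function on the
   quotient, so the summands, and hence the disjoint unions, are locally compact
   Hausdorff spaces.  On each summand, BC is induced by a map of parameter vectors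
   that only repeats coordinates, every input coordinate occurring in the output;
   hence it is continuous and norm preserving.  A compact set K of the complex
   dual meets finitely many summands and has bounded norm.  The real inducing
   data are determined by the complex ones together with the number of sign
   characters, so only finitely many summands meet BC^-1(K), which is therefore
   a closed subset of a finite union of images of closed balls. *)

From HB Require Import structures.
From mathcomp Require Import all_boot all_order all_algebra all_fingroup.
From mathcomp Require Import all_classical all_reals all_analysis.
From mathcomp Require Import generic_quotient unstable zify.
Set Implicit Arguments. Unset Strict Implicit. Unset Printing Implicit Defensive.
Import Order.TTheory GRing.Theory Num.Theory.
Import numFieldNormedType.Exports.
Local Open Scope classical_set_scope.
Local Open Scope ring_scope.
Local Open Scope quotient_scope.

Section RowSelection.
Variable R : realType.

Lemma rV_entry_le_norm k (v : 'rV[R]_k) i : `|v ord0 i| <= `|v|.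
Proof.
rewrite [leRHS]/Num.norm /= mx_normrE.
exact: le_trans (le_bigmax _ _ (ord0, i)).
Qed.

Lemma rV_norm_le k (v : 'rV[R]_k) M :
  0 <= M -> (forall i, `|v ord0 i| <= M) -> `|v| <= M.
Proof.
move=> M0 vM; rewrite [leLHS]/Num.norm /= mx_normrE.
by apply: bigmax_le => // -[i j] _; rewrite (ord1 i).
Qed.

Definition rV_select k m (f : 'I_k -> 'I_m) (t : 'rV[R]_m) : 'rV[R]_k :=
  \row_j t ord0 (f j).

Lemma rV_selectB k m (f : 'I_k -> 'I_m) t t' :
  rV_select f (t - t') = rV_select f t - rV_select f t'.
Proof. by apply/matrixP => i j; rewrite !mxE. Qed.

Lemma rV_select_norm_le k m (f : 'I_k -> 'I_m) t : `|rV_select f t| <= `|t|.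
Proof. by apply: rV_norm_le => // j; rewrite mxE; exact: rV_entry_le_norm. Qed.

Lemma rV_select_norm k m (f : 'I_k -> 'I_m) t :
  (forall i, exists j, f j = i) -> `|rV_select f t| = `|t|.
Proof.
move=> f_surj; apply/le_anti; rewrite rV_select_norm_le /=.
apply: rV_norm_le => // i; have [j <-] := f_surj i.
by have := rV_entry_le_norm (rV_select f t) j; rewrite mxE.
Qed.

Lemma rV_select_continuous k m (f : 'I_k -> 'I_m) : continuous (rV_select f).
Proof.
move=> t; apply/(@cvg_ballP _ _ _ (nbhs t) (nbhs_filter t)) => e e0.
apply/nbhs_ballP; exists e => //= t'.
rewrite !mx_norm_ball /ball_ /= -rV_selectB.
exact: le_lt_trans (rV_select_norm_le _ _).
Qed.

Lemma rV_closed_ball_compact k (x : 'rV[R]_k) e :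
  compact (closed_ball_ Num.norm x e).
Proof.
apply: bounded_closed_compact; last exact: closed_closed_ball_.
exists (`|x| + e); split; first exact: num_real.
move=> M xeM y /= xye; apply: le_trans (ltW xeM).
rewrite (_ : y = x - (x - y)); last by rewrite opprB addrC subrK.
by apply: le_trans (ler_normB _ _) _; rewrite lerD2l.
Qed.
End RowSelection.

(* [compact_cover] is stated for pointed spaces only; a nonempty set provides
   a point. *)
Definition pointed_at (T : Type) (x : T) : Type := T.
HB.instance Definition _ (T : topologicalType) (x : T) :=
  Topological.copy (pointed_at x) T.
HB.instance Definition _ (T : topologicalType) (x : T) :=
  isPointed.Build (pointed_at x) x.

Lemma compact_cover_compact (T : topologicalType) (A : set T) :
  compact A -> cover_compact A.
Proof.
have [[x _]|/set0P/negP/negPn/eqP->] := pselect (A !=set0); last first.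
  by move=> _ I D F _ _; exists finmap.fset0.
by move=> cA; have : @compact (pointed_at x) A := cA; rewrite compact_cover.
Qed.

Lemma compact_bigcup (T : topologicalType) (I : choiceType) (D : set I)
    (F : I -> set T) :
  finite_set D -> (forall i, D i -> compact (F i)) ->
  compact (\bigcup_(i in D) F i).
Proof.
move=> finD cF; rewrite -bigsetU_fset_set // big_seq.
by apply: bigsetU_compact => i; rewrite in_fset_set // inE; exact: cF.
Qed.

Lemma proper_mapP (X Y : topologicalType) (f : X -> Y) :
  continuous f -> hausdorff_space Y ->
  (forall K, compact K -> exists2 C, compact C & f @^-1` K `<=` C) ->
  proper_map f.
Proof.
move=> cf hY fC K cK; have [C cC fKC] := fC K cK.
apply: subclosed_compact cC fKC.
by apply: closed_comp (compact_closed hY cK) => x _; exact: cf.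
Qed.

Lemma compact_continuous_ub (R : realType) (T : topologicalType) (f : T -> R)
    (K : set T) :
  continuous f -> compact K -> exists M, forall x, K x -> f x <= M.
Proof.
move=> cf cK.
have := compact_bounded (continuous_compact (continuous_subspaceT cf) cK).
case=> M0 [_ M0ub]; exists (M0 + 1) => x Kx.
have /M0ub/(_ (f x)) : M0 < M0 + 1 by rewrite ltrDl.
by move=> /(_ (ex_intro2 _ _ x Kx erefl)); apply: le_trans; exact: ler_norm.
Qed.

Section SigmaSpaces.
Context {I : choiceType} {X : I -> topologicalType}.

Lemma sigT_compact_finite_index (K : set {i & X i}) :
  compact K -> finite_set (@projT1 I X @` K).
Proof.
move=> /compact_cover_compact /(_ I setT (fun i => existT X i @` setT)) [].
- by move=> i _; apply: existT_open_map; exact: openT.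
- by move=> [i x] _; exists i => //; exists x.
move=> D _ KD; apply: sub_finite_set (finite_fset D).
by move=> _ [p /KD[i Di [x _ <-]] <-].
Qed.

Lemma sigT_locally_compact :
  (forall i, hausdorff_space (X i)) -> (forall i, locally_compact [set: X i]) ->
  locally_compact [set: {i & X i}].
Proof.
move=> hX lcX [i x] _; rewrite withinET.
have [U] := lcX i x Logic.I; rewrite withinET => Ux [cU _].
have cU' : compact (existT X i @` U).
  by apply: continuous_compact cU; exact/continuous_subspaceT/existT_continuous.
exists (existT X i @` U); first exact: existT_nbhs.
by split => //; apply: compact_closed cU'; exact: sigT_hausdorff.
Qed.
End SigmaSpaces.

Section OrbitSpace.
Variables (R : realType) (L : eqType) (ls : seq L).
Local Notation m := (size ls).
Local Notation Q := (comp_space R ls).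
Local Notation pi := (\pi_Q : 'rV[R]_m -> Q).
Local Notation orbit := (@orbit_rel R L ls).
Local Notation act := (@perm_act R L ls).

Lemma comp_space_eqP (a b : 'rV[R]_m) : pi a = pi b <-> orbit a b.
Proof. by split=> [/eqmodP | ?]; last apply/eqmodP. Qed.

Lemma perm_actB s t t' : act s (t - t') = act s t - act s t'.
Proof. exact: rV_selectB. Qed.

Lemma norm_perm_act s t : `|act s t| = `|t|.
Proof.
by apply: (@rV_select_norm R m m s) => i; exists (s^-1 i)%g; rewrite permKV.
Qed.

Lemma orbit_rel_norm a b : orbit a b -> `|a| = `|b|.
Proof. by case/existsP => s /andP[_ /eqP ->]; rewrite norm_perm_act. Qed.

Lemma pi_open_map (U : set 'rV[R]_m) : open U -> open (pi @` U).
Proof.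
move=> oU; rewrite /open /= /quotient_open.
have -> : pi @^-1` (pi @` U)
    = \bigcup_(s in [set s | @stab L ls s]) (act s @^-1` U).
  apply/seteqP; split => y /=.
    case=> u Uu /comp_space_eqP; rewrite orbit_rel_sym.
    by case/existsP => s /andP[st /eqP yu]; exists s => //=; rewrite -yu.
  case=> s /= st Uy; exists (act s y) => //; apply/comp_space_eqP.
  by rewrite orbit_rel_sym; apply/existsP; exists s; rewrite st eqxx.
apply: bigcup_open => s _; apply: open_comp oU => y _.
exact: (@rV_select_continuous R m m s).
Qed.

Lemma comp_space_hausdorff : hausdorff_space Q.
Proof.
rewrite open_hausdorff => x y xy.
set a := repr x; set b := repr y.
have b_notin_orbit s : @stab L ls s -> b != act s a.
  move=> st; apply: contra_neq xy => bsa; rewrite -[x]reprK -[y]reprK.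
  by apply/comp_space_eqP/existsP; exists s; rewrite -/a -/b st bsa eqxx.
(* the distance from b to the orbit of a, capped at 1 *)
pose e := \big[Num.min/1]_(s | @stab L ls s) `|b - act s a|.
have e2_gt0 : 0 < e / 2.
  rewrite divr_gt0 //; apply: lt_bigmin => // s st.
  by rewrite normr_gt0 subr_eq0 b_notin_orbit.
exists (pi @` ball a (e / 2), pi @` ball b (e / 2)); split => /=.
- by rewrite inE; exists a; [exact: ballxx | exact: reprK].
- by rewrite inE; exists b; [exact: ballxx | exact: reprK].
- exact/pi_open_map/ball_open.
- exact/pi_open_map/ball_open.
apply/eqP/seteqP; split => // _ [[a' aa' <-] [b' bb' /comp_space_eqP]].
rewrite orbit_rel_sym => /existsP[s /andP[st /eqP b'E]].
move: aa' bb'; rewrite !mx_norm_ball /ball_ /= => aa' bb'.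
have : e <= `|b - act s a| by exact: bigmin_le_cond.
apply/negP; rewrite -ltNge.
rewrite (_ : b - act s a = (b - b') + act s (a' - a)); last first.
  by rewrite perm_actB -b'E addrA subrK.
rewrite (le_lt_trans (ler_normD _ _)) // norm_perm_act (splitr e) (distrC a').
exact: ltrD.
Qed.

Lemma comp_space_locally_compact : locally_compact [set: Q].
Proof.
move=> x _; rewrite withinET; set a := repr x.
have cB : compact (pi @` closed_ball_ Num.norm a 1).
  apply: continuous_compact; last exact: rV_closed_ball_compact.
  exact/continuous_subspaceT/pi_continuous.
exists (pi @` closed_ball_ Num.norm a 1).
  apply: (@filterS _ _ _ (pi @` ball a 1)).
    move=> _ [v av <-]; exists v => //.
    by move: av; rewrite mx_norm_ball => /ltW.
  apply: open_nbhs_nbhs; split; first exact/pi_open_map/ball_open.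
  by exists a; [exact: ballxx | exact: reprK].
by split => //; exact: compact_closed comp_space_hausdorff cB.
Qed.

Definition orbit_norm (x : Q) : R := `|repr x|.

Lemma orbit_normE a : orbit_norm (pi a) = `|a|.
Proof. by apply: orbit_rel_norm; apply/comp_space_eqP; rewrite reprK. Qed.

Lemma orbit_norm_continuous : continuous orbit_norm.
Proof.
apply: repr_comp_continuous; first by move=> v; exact: norm_continuous.
by move=> a b /eqP /comp_space_eqP /orbit_rel_norm ->.
Qed.

End OrbitSpace.

Lemma comp_space_lift_continuous (R : realType) (L L' : eqType) (ls : seq L)
    (ls' : seq L') (f : 'rV[R]_(size ls) -> 'rV[R]_(size ls')) :
  continuous f -> {homo f : a b / orbit_rel a b >-> orbit_rel a b} ->
  continuous (fun x : comp_space R ls => \pi_(comp_space R ls') (f (repr x))).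
Proof.
move=> cf f_orbit.
apply: (@repr_comp_continuous _ _ _ (\pi_(comp_space R ls') \o f)).
  by move=> t; apply: continuous_comp; [exact: cf | exact: pi_continuous].
by move=> a b /eqP /comp_space_eqP /f_orbit ?; apply/eqP/comp_space_eqP.
Qed.

Definition row_entries (R : Type) k (t : 'rV[R]_k) : seq R :=
  [seq t ord0 i | i <- enum 'I_k].

Lemma size_row_entries (R : Type) k (t : 'rV[R]_k) : size (row_entries t) = k.
Proof. by rewrite size_map size_enum_ord. Qed.

Lemma orbit_rel_perm_eq (R : realType) (L : eqType) (ls : seq L)
    (t t' : 'rV[R]_(size ls)) :
  orbit_rel t t' <-> perm_eq (zip ls (row_entries t)) (zip ls (row_entries t')).
Proof.
have zipE (u : 'rV[R]_(size ls)) :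
    zip ls (row_entries u) = [tuple (lab i, u ord0 i) | i < size ls].
  by rewrite /= -zip_map /row_entries /lab map_tnth_enum.
rewrite !zipE perm_sym; split.
  case/existsP => s /andP[/forallP st /eqP ->]; apply/tuple_permP; exists s.
  by apply: eq_map => i; rewrite !tnth_mktuple mxE (eqP (st i)).
case/tuple_permP => s /= /eq_in_map sE.
apply/existsP; exists s; apply/andP; split.
  apply/forallP => i.
  by have := sE i (mem_enum _ i); rewrite !tnth_mktuple => -[->].
apply/eqP/matrixP => i j; rewrite (ord1 i) mxE.
by have := sE j (mem_enum _ j); rewrite !tnth_mktuple => -[].
Qed.

(* A discrete series pi(chi) of weight k base-changes to chi and chi^sigma,
   of labels k-1 and -(k-1); a character xi of R^x to xi o N, of label 0. *)
Definition bc_weights (l : nat + bool) : seq int :=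
  if l is inl k then [:: Posz k.-1; - Posz k.-1] else [:: 0%Z].

Definition bc_pairs (V : Type) (ls : seq (nat + bool)) (vs : seq V) :
    seq (int * V) :=
  flatten [seq [seq (z, lv.2) | z <- bc_weights lv.1] | lv <- zip ls vs].

Lemma bc_labelsE (c : seq nat * seq bool) :
  bc_labels c = sort le_int (flatten (map bc_weights (labR c))).
Proof.
rewrite /bc_labels /labR map_cat flatten_cat -!map_comp.
congr (sort _ (_ ++ _)).
by elim: c.2 => //= b s ->.
Qed.

Section BCPairs.
Variables (V : eqType) (ls : seq (nat + bool)).

Lemma bc_pairs_fst (vs : seq V) :
  size ls = size vs -> map fst (bc_pairs ls vs) = flatten (map bc_weights ls).
Proof.
move=> eq_size; rewrite map_flatten -map_comp.
rewrite (eq_map (g := bc_weights \o fst)); last first.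
  by move=> lv /=; rewrite -map_comp map_id.
by rewrite (map_comp bc_weights fst) -/(unzip1 _) unzip1_zip ?eq_size.
Qed.

Lemma bc_pairs_map (W : Type) (f : V -> W) (vs : seq V) :
  bc_pairs ls (map f vs) = map (fun p => (p.1, f p.2)) (bc_pairs ls vs).
Proof.
elim: ls vs => [|l ls' IH] [|v vs] //=.
by rewrite /bc_pairs /= map_cat -map_comp -/(bc_pairs _ _) IH.
Qed.

Lemma perm_bc_pairs (vs vs' : seq V) :
  perm_eq (zip ls vs) (zip ls vs') ->
  perm_eq (bc_pairs ls vs) (bc_pairs ls vs').
Proof. by move=> P; apply: perm_flatten; exact: perm_map. Qed.

Lemma mem_bc_pairs (vs : seq V) v :
  size ls = size vs -> v \in vs -> v \in map snd (bc_pairs ls vs).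
Proof.
elim: ls vs => [|l ls' IH] [|w vs] //= [eq_size].
rewrite /bc_pairs /= map_cat mem_cat.
rewrite in_cons => /orP[/eqP->|/(IH _ eq_size)->]; last exact: orbT.
by case: l => [k|b]; rewrite /= in_cons eqxx.
Qed.
End BCPairs.

(* The left-hand side is the list of labelled parameters built in [bc_vector]. *)
Lemma bc_raw_pairs (V : Type) (a : seq nat) (b : seq bool) (ts : seq V) :
  size ts = (size a + size b)%N ->
  flatten [seq [:: (Posz kt.1.-1, kt.2); (- Posz kt.1.-1, kt.2)] | kt <- zip a ts]
    ++ [seq (0%Z, x) | x <- drop (size a) ts]
  = bc_pairs (map inl a ++ map inr b) ts.
Proof.
elim: a ts => [|k a IH] ts /=.
  rewrite drop0 (_ : zip [::] ts = [::]) /=; last by case: ts.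
  by elim: b ts => [|x b IHb] [|w ts] //= [/IHb ->].
by case: ts => [|v ts] //= [/IH ->].
Qed.

Section BaseChangeVector.
Variables (R : realType) (n : nat) (c : CR n).
Local Notation N := (size (labR (val c))).
Local Notation N' := (size (val (bc_index c))).

Definition bc_index_pairs : seq (int * 'I_N) :=
  sort (fun p q => le_int p.1 q.1) (bc_pairs (labR (val c)) (enum 'I_N)).

Lemma bc_index_pairs_fst : map fst bc_index_pairs = val (bc_index c).
Proof.
by rewrite -sort_map bc_pairs_fst ?size_enum_ord //= bc_labelsE.
Qed.

Lemma size_bc_index_pairs : size bc_index_pairs == N'.
Proof. by rewrite -(size_map fst) bc_index_pairs_fst. Qed.

Lemma bc_sorted_pairsE (t : 'rV[R]_N) :
  sort (fun p q => le_int p.1 q.1) (bc_pairs (labR (val c)) (row_entries t))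
  = [seq (p.1, t ord0 p.2) | p <- bc_index_pairs].
Proof. by rewrite /row_entries bc_pairs_map sort_map. Qed.

Lemma bc_vectorE (t : 'rV[R]_N) :
  bc_vector t = \row_j nth 0 [seq t ord0 p.2 | p <- bc_index_pairs] j.
Proof.
rewrite /bc_vector /= (bc_raw_pairs (b := (val c).2)); last first.
  by rewrite size_row_entries size_cat !size_map.
by rewrite -/(row_entries t) bc_sorted_pairsE -map_comp.
Qed.

Definition bc_source (j : 'I_N') : 'I_N :=
  (tnth (Tuple size_bc_index_pairs) j).2.

Lemma bc_vector_select : @bc_vector R n c = rV_select bc_source.
Proof.
apply/funext => t; apply/matrixP => i j; rewrite bc_vectorE !mxE.
rewrite /bc_source (tnth_nth (tnth (Tuple size_bc_index_pairs) j)) /=.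
rewrite (nth_map (tnth (Tuple size_bc_index_pairs) j)) //.
by rewrite (eqP size_bc_index_pairs).
Qed.

Lemma bc_source_surjective i : exists j, bc_source j = i.
Proof.
have : i \in map snd bc_index_pairs.
  rewrite (perm_mem (perm_map _ (permEl (perm_sort _ _)))).
  by apply: mem_bc_pairs; rewrite ?size_enum_ord ?mem_enum.
case/(nthP i) => j; rewrite size_map (eqP size_bc_index_pairs) => j_lt <-.
exists (Ordinal j_lt); rewrite /bc_source (tnth_nth (0%Z, i)) /=.
by rewrite (nth_map (0%Z, i)) // (eqP size_bc_index_pairs).
Qed.

Lemma bc_vector_continuous : continuous (@bc_vector R n c).
Proof. by rewrite bc_vector_select; exact: rV_select_continuous. Qed.

Lemma norm_bc_vector (t : 'rV[R]_N) : `|bc_vector t| = `|t|.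
Proof.
by rewrite bc_vector_select; apply: rV_select_norm; exact: bc_source_surjective.
Qed.

Lemma row_entries_bc_vector (t : 'rV[R]_N) :
  row_entries (bc_vector t) = [seq t ord0 p.2 | p <- bc_index_pairs].
Proof.
rewrite /row_entries; under eq_map => j do rewrite bc_vectorE mxE.
rewrite (map_comp (nth _ _) val) val_enum_ord.
by rewrite -[RHS](mkseq_nth 0) size_map (eqP size_bc_index_pairs).
Qed.

Lemma bc_vector_orbit : {homo (@bc_vector R n c) : t t' / orbit_rel t t'}.
Proof.
have zipE (t : 'rV[R]_N) : zip (val (bc_index c)) (row_entries (bc_vector t))
    = sort (fun p q => le_int p.1 q.1) (bc_pairs (labR (val c)) (row_entries t)).
  by rewrite row_entries_bc_vector bc_sorted_pairsE -bc_index_pairs_fst zip_map.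
move=> t t' /orbit_rel_perm_eq /perm_bc_pairs P; apply/orbit_rel_perm_eq.
by rewrite !zipE perm_sort perm_sym perm_sort perm_sym.
Qed.
End BaseChangeVector.

Lemma count_bool (p : pred bool) (s : seq bool) :
  count p s = (p true * count id s + p false * count negb s)%N.
Proof.
elim: s => [|b s IH] /=; first by rewrite !muln0.
by rewrite IH; case: b; case: (p true); case: (p false) => /=; lia.
Qed.

Lemma sorted_bool_eq (s1 s2 : seq bool) :
  sorted le_bool s1 -> sorted le_bool s2 ->
  size s1 = size s2 -> count id s1 = count id s2 -> s1 = s2.
Proof.
move=> sorted1 sorted2 eq_size eq_count.
apply: (sorted_eq (leT := le_bool) _ _ sorted1 sorted2).
- by move=> ? ? ?; exact: leq_trans.
- by move=> [] [].
have count_negb s : count negb s = (size s - count id s)%N.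
  by rewrite -(count_predC id s) addKn.
apply/seq.permP => p.
by rewrite (count_bool p s1) (count_bool p s2) !count_negb eq_size eq_count.
Qed.

Section BaseChangeIndex.
Variable n : nat.

Lemma filter_pos_bc_weights (c : seq nat * seq bool) :
  all (fun k => 2 <= k)%N c.1 ->
  seq.filter (fun z : int => 0 < z) (flatten (map bc_weights (labR c)))
  = map (fun k => Posz k.-1) c.1.
Proof.
rewrite /labR map_cat flatten_cat filter_cat -!map_comp.
rewrite (_ : seq.filter _ (flatten (map (bc_weights \o inr) c.2)) = [::]).
  rewrite cats0; elim: c.1 => //= k ks IH /andP[k_ge2 /IH <-].
  by case: k k_ge2 => [|[|k]].
by elim: c.2 => //= b s ->.
Qed.

Lemma count_bc_weights0 (c : seq nat * seq bool) :
  all (fun k => 2 <= k)%N c.1 ->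
  count (pred1 0%Z) (flatten (map bc_weights (labR c))) = size c.2.
Proof.
move=> ge2; rewrite /labR map_cat flatten_cat count_cat -!map_comp.
rewrite (_ : count _ (flatten (map (bc_weights \o inl) c.1)) = 0%N) ?add0n.
  by elim: c.2 => //= b s ->.
elim: c.1 ge2 => //= k ks IH /andP[k_ge2 /IH ->].
by case: k k_ge2 => [|[|k]].
Qed.

Lemma bc_labels_inj (c1 c2 : seq nat * seq bool) :
  CR_pred n c1 -> CR_pred n c2 ->
  bc_labels c1 = bc_labels c2 -> count id c1.2 = count id c2.2 -> c1 = c2.
Proof.
case/and4P=> ge2_1 sorted1 sorted_b1 _; case/and4P=> ge2_2 sorted2 sorted_b2 _.
rewrite !bc_labelsE => eq_sort eq_count.
have P : perm_eq (flatten (map bc_weights (labR c1)))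
                 (flatten (map bc_weights (labR c2))).
  by rewrite -(perm_sort le_int) eq_sort perm_sort.
have eq1 : c1.1 = c2.1.
  apply: (sorted_eq leq_trans anti_leq) => //.
  have := perm_filter (fun z : int => 0 < z) P.
  move=> /(perm_map (fun z : int => (absz z).+1)).
  rewrite !filter_pos_bc_weights // -!map_comp !map_id_in //.
  - by move=> k /(allP ge2_2) /=; case: k.
  - by move=> k /(allP ge2_1) /=; case: k.
have eq2 : c1.2 = c2.2.
  apply: sorted_bool_eq => //.
  rewrite -(count_bc_weights0 ge2_1) -(count_bc_weights0 ge2_2).
  by rewrite (seq.permP P).
exact: injective_projections eq1 eq2.
Qed.

Lemma count_CR_lt (c : CR n) : (count id (val c).2 < n.+1)%N.
Proof.
rewrite ltnS; apply: leq_trans (count_size _ _) _.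
case/and4P: (valP c) => _ _ _ /eqP size_c.
by rewrite -[X in (_ <= X)%N]size_c leq_addl.
Qed.

Lemma bc_index_preimage_finite (D : set (CC n)) :
  finite_set D -> finite_set (@bc_index n @^-1` D).
Proof.
move=> finD; pose index_count (c : CR n) := (bc_index c, count id (val c).2).
have : finite_set (index_count @^-1` (D `*` `I_(n.+1))).
  apply: finite_preimage; last exact: finite_setX finD (finite_II _).
  move=> c1 c2 _ _ [eq_labels eq_count]; apply: val_inj.
  exact: bc_labels_inj (valP c1) (valP c2) eq_labels eq_count.
by apply: sub_finite_set => c Dc; split => //=; exact: count_CR_lt.
Qed.
End BaseChangeIndex.

Section BaseChange.
Variables (R : realType) (n : nat).

Definition bc_fiber (c : CR n) (x : comp_space R (labR (val c))) :
    comp_space R (val (bc_index c)) :=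
  \pi_(comp_space R (val (bc_index c))) (bc_vector (repr x)).

Lemma BCE : @BC R n = sigT_fun (fun c x => existT _ (bc_index c) (bc_fiber x)).
Proof. by apply/funext => -[]. Qed.

Lemma BC_continuous : continuous (@BC R n).
Proof.
rewrite BCE; apply: sigT_continuous => c x.
apply: continuous_comp; last exact: existT_continuous.
apply: comp_space_lift_continuous;
  [exact: bc_vector_continuous | exact: bc_vector_orbit].
Qed.

Definition TempC_norm : TempC R n -> R :=
  sigT_fun (fun c' (z : comp_space R (val c')) => orbit_norm z).

Lemma TempC_norm_continuous : continuous TempC_norm.
Proof. by apply: sigT_continuous => c'; exact: orbit_norm_continuous. Qed.

Lemma TempR_hausdorff : hausdorff_space (TempR R n).
Proof. by apply: sigT_hausdorff => c; exact: comp_space_hausdorff. Qed.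

Lemma TempC_hausdorff : hausdorff_space (TempC R n).
Proof. by apply: sigT_hausdorff => c; exact: comp_space_hausdorff. Qed.

Lemma BC_proper : proper_map (@BC R n).
Proof.
apply: proper_mapP; [exact: BC_continuous | exact: TempC_hausdorff |].
move=> K cK; have [M normK] := compact_continuous_ub TempC_norm_continuous cK.
pose S := @bc_index n @^-1` (@projT1 _ _ @` K).
have finS : finite_set S.
  exact/bc_index_preimage_finite/sigT_compact_finite_index.
exists (\bigcup_(c in S) existT _ c @`
    (\pi_(comp_space R (labR (val c))) @` closed_ball_ Num.norm 0 M)).
  apply: compact_bigcup => // c _.
  apply: continuous_compact; first exact/continuous_subspaceT/existT_continuous.
  apply: continuous_compact; last exact: rV_closed_ball_compact.
  exact/continuous_subspaceT/pi_continuous.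
move=> [c x] /= Kcx; exists c; first by exists (BC (existT _ c x)).
exists x => //; exists (repr x); last exact: reprK.
rewrite /closed_ball_ /= sub0r normrN -(norm_bc_vector (repr x)) -orbit_normE.
exact: normK Kcx.
Qed.

Lemma TempR_locally_compact : locally_compact [set: TempR R n].
Proof.
apply: sigT_locally_compact => c;
  [exact: comp_space_hausdorff | exact: comp_space_locally_compact].
Qed.

Lemma TempC_locally_compact : locally_compact [set: TempC R n].
Proof.
apply: sigT_locally_compact => c;
  [exact: comp_space_hausdorff | exact: comp_space_locally_compact].
Qed.
End BaseChange.

Theorem proposition6p1 (R : realType) (n : nat) : (1 <= n)%N ->
  (continuous (@BC R n) /\ proper_map (@BC R n)) /\
  (locally_compact [set: TempR R n] /\ hausdorff_space (TempR R n)) /\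
  (locally_compact [set: TempC R n] /\ hausdorff_space (TempC R n)).
Proof.
move=> _; split; first by split; [exact: BC_continuous | exact: BC_proper].
split; split; [exact: TempR_locally_compact | exact: TempR_hausdorff |
  exact: TempC_locally_compact | exact: TempC_hausdorff].
Qed.
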